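(* Let $f$ be a probability density on $\mathbb{R}$ and let $\pi_0$ be the value of the problem $$\text{maximize }\int h\quad\text{over}\quad\{h:\mathbb{R}\to\mathbb{R}_+\text{ log-concave},\ h\le f\text{ a.e.}\}.$$ Let $\hat f_n$ be a density estimator computed from a sample of size $n$ from $f$, with each $\hat f_n$ a probability density, and assume $$\mathbb{E}\left[\operatorname{ess\,sup}_{|x|\le a}\frac{\max\{\hat f_n(x),f(x)\}}{\min\{\hat f_n(x),f(x)\}}\right]\to1\quad\text{as }n\to\infty,\ \text{for every } a>0.$$ Let $\hat\pi_0$ be the value of the same optimization problem with $f$ replaced by $\hat f_n$. Then $\hat\pi_0\to\pi_0$ in probability as $n\to\infty$.
   Context: A function $h:\mathbb{R}\to[0,\infty)$ is log-concave if $\log h:\mathbb{R}\to[-\infty,\infty)$ is concave (with $\log0=-\infty$). *)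

From HB Require Import structures.
From mathcomp Require Import all_boot all_order all_algebra.
From mathcomp Require Import all_classical all_reals all_analysis.
From mathcomp Require Import measurable_realfun.
Set Implicit Arguments. Unset Strict Implicit. Unset Printing Implicit Defensive.
Import Order.TTheory GRing.Theory Num.Theory.
Import numFieldNormedType.Exports.
Local Open Scope classical_set_scope.
Local Open Scope ring_scope.

Section defs.
Variable R : realType.
Local Notation leb := (@lebesgue_measure R).

Definition logE (h : R -> R) (x : R) : \bar R :=
  if 0 < h x then (ln (h x))%:E else -oo%E.

(* h : R -> [0,oo) is log-concave: log h : R -> [-oo,oo) is concave
   (with the usual convention 0 * -oo = 0) *)
Definition log_concave (h : R -> R) : Prop :=
  (forall x, 0 <= h x) /\
  forall (x y t : R), 0 <= t <= 1 ->
    (t%:E * logE h x + (1 - t)%:E * logE h y <= logE h (t * x + (1 - t) * y))%E.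

Definition prob_density (f : R -> R) : Prop :=
  measurable_fun setT f /\ (forall x, 0 <= f x) /\
  (\int[leb]_(x in setT) (f x)%:E = 1)%E.

Definition lc_value (f : R -> R) : \bar R :=
  ereal_sup [set (\int[leb]_(x in setT) (h x)%:E)%E | h in
     [set h | log_concave h /\ {ae leb, forall x, h x <= f x}]].

Definition maxmin_ratio (u v : R) : \bar R :=
  if 0 < Num.min u v then (Num.max u v / Num.min u v)%:E
  else if Num.max u v == 0 then 1%E else +oo%E.

Definition esssup_on (a : R) (g : R -> \bar R) : \bar R :=
  ereal_inf [set y | {ae leb, forall x, `|x| <= a -> (g x <= y)%E}].

End defs.

From HB Require Import structures.
From mathcomp Require Import all_boot all_order all_algebra.
From mathcomp Require Import all_classical all_reals all_analysis.
From mathcomp Require Import measurable_realfun.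
From mathcomp Require Import ring lra.
Import Order.TTheory GRing.Theory Num.Theory.
Import numFieldNormedType.Exports.
Local Open Scope classical_set_scope.
Local Open Scope ring_scope.

(* For a density u write V(u) = lc_value u, the largest mass of a log-concave
   minorant of u.  The proof is deterministic up to a final Markov argument.
   1. Log-concave functions are quasi-concave, hence Lebesgue measurable, and
      truncating one to [-a, a] and rescaling it keeps it log-concave.
   2. Comparison: if u <= c v a.e. on [-a, a] then V(u) <= c V(v) + (mass
      of u outside [-a, a]); indeed a log-concave h <= u yields the
      log-concave candidate h 1_[-a,a] / c <= v.  Applying this in both
      directions gives |V(g) - V(f)| <= 2 (c - 1) + eta whenever f and g are
      within ratio c of each other on [-a, a] and f has tail mass <= eta.
   3. If the essential sup of the ratio max/min of fhat_n and f on [-a, a] is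
      at most 1 + eps/8 then |V(fhat_n) - V(f)| <= 3 eps / 4, where a is
      chosen so that f has tail mass <= eps/4 outside [-a, a].
   4. By Markov's inequality, random variables r_n >= 1 with E r_n --> 1
      satisfy P(r_n > 1 + delta) --> 0; applied to that essential sup this
      gives the convergence in probability. *)

Set Implicit Arguments. Unset Strict Implicit.

Section log_concavity.
Variable R : realType.
Implicit Types h : R -> R.

Definition log_concave_pos h := forall x y t : R, 0 < t < 1 ->
  0 < h x -> 0 < h y ->
  0 < h (t * x + (1 - t) * y) /\
  t * ln (h x) + (1 - t) * ln (h y) <= ln (h (t * x + (1 - t) * y)).

Lemma log_concave_posW h : log_concave h -> log_concave_pos h.
Proof.
move=> [_ hc] x y t /andP[t0 t1] hx hy.
have := hc x y t; rewrite (ltW t0) (ltW t1) => /(_ isT).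
rewrite /logE hx hy; case: ifPn => hz; first by rewrite -!EFinM -EFinD lee_fin.
by rewrite leeNy_eq.
Qed.

(* Conversely the endpoint cases t = 0, 1 and the cases where h vanishes at
   an endpoint hold trivially. *)
Lemma log_concave_of_pos h :
  (forall x, 0 <= h x) -> log_concave_pos h -> log_concave h.
Proof.
move=> h0 hc; split => // x y t /andP[t0 t1].
have [->|tn0] := eqVneq t 0.
  by rewrite mul0r add0r subr0 mul1r mul0e add0e mul1e.
have [->|tn1] := eqVneq t 1.
  by rewrite subrr mul0r addr0 mul1r mul0e adde0 mul1e.
have t01 : 0 < t < 1 by rewrite !lt_neqAle eq_sym tn0 tn1 t0 t1.
have t1' : 0 < 1 - t by case/andP: t01 => _; rewrite subr_gt0.
rewrite /logE; case: (ltP 0 (h x)) => hx; last first.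
  by rewrite muleC gt0_mulNye ?lte_fin ?(andP t01).1 // addNye leNye.
case: (ltP 0 (h y)) => hy; last first.
  by rewrite [X in (_ + X)%E]muleC gt0_mulNye ?lte_fin // addeNy leNye.
have [hz hi] := hc x y t t01 hx hy.
by rewrite hz -!EFinM -EFinD lee_fin.
Qed.

Lemma log_concave0 : log_concave (fun _ : R => 0).
Proof. by apply: log_concave_of_pos => // x y t _; rewrite ltxx. Qed.

Lemma log_concave_quasi_concave h : log_concave h -> forall x y z,
  x <= z <= y -> Num.min (h x) (h y) <= h z.
Proof.
move=> hl x y z /andP[xz zy]; have h0 := hl.1.
have [->|zx] := eqVneq z x; first by rewrite ge_min lexx.
have [->|zy'] := eqVneq z y; first by rewrite ge_min lexx orbT.
have xz' : x < z by rewrite lt_neqAle xz eq_sym zx.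
have zy'' : z < y by rewrite lt_neqAle zy zy'.
have yx : 0 < y - x by rewrite subr_gt0 (lt_trans xz' zy'').
pose t := (y - z) / (y - x).
have t01 : 0 < t < 1.
  rewrite /t divr_gt0 ?subr_gt0 ?(lt_trans xz') //=.
  by rewrite ltr_pdivrMr // mul1r ltrD2l ltrN2.
have ze : t * x + (1 - t) * y = z by rewrite /t; field; rewrite gt_eqF.
case: (leP (h x) 0) => hx; first by rewrite ge_min (le_trans hx (h0 z)).
case: (leP (h y) 0) => hy; first by rewrite ge_min (le_trans hy (h0 z)) orbT.
have [hz hi] := log_concave_posW hl t01 hx hy; rewrite ze in hz hi.
have [t0 t1] := andP t01.
have posz : h z \is Num.pos by rewrite posrE.
(* ln (h z) dominates a convex combination of ln (h x) and ln (h y) *)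
case: (leP (h x) (h y)) => hxy.
  rewrite -(ler_ln _ posz) ?posrE //.
  have l : ln (h x) <= ln (h y) by rewrite ler_ln ?posrE.
  have : (1 - t) * ln (h x) <= (1 - t) * ln (h y).
    by apply: ler_wpM2l; rewrite // subr_ge0 ltW.
  lra.
rewrite -(ler_ln _ posz) ?posrE //.
have l : ln (h y) <= ln (h x) by rewrite ler_ln ?posrE // ltW.
have : t * ln (h y) <= t * ln (h x) by apply: ler_wpM2l; rewrite // ltW.
lra.
Qed.

(* Superlevel sets of a quasi-concave function are intervals. *)
Lemma log_concave_measurable h : log_concave h -> measurable_fun setT h.
Proof.
move=> hl; apply: (measurability _ (RGenOInfty.measurableE R)) => //.
move=> /= _ [_ [r ->] <-]; apply: measurableI => //.
apply: is_interval_measurable => u v /= hu hv z uzv.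
move: hu hv; rewrite !in_itv /= !andbT => hu hv.
by apply: lt_le_trans (log_concave_quasi_concave hl uzv); rewrite lt_min hu hv.
Qed.

Lemma log_concave_trunc_scale h (a c : R) : log_concave h -> 0 < c ->
  log_concave (fun x => if `|x| <= a then h x / c else 0).
Proof.
move=> hl c0; have h0 := hl.1; apply: log_concave_of_pos.
  by move=> x; case: ifP => // _; rewrite divr_ge0 // ltW.
move=> x y t t01; have [t0 t1] := andP t01.
case: ifPn => ax; last by rewrite ltxx.
case: ifPn => ay; last by rewrite ltxx.
rewrite !pmulr_lgt0 ?invr_gt0 // => hx hy.
have [hz hi] := log_concave_posW hl t01 hx hy.
have az : `|t * x + (1 - t) * y| <= a.
  apply: le_trans (ler_normD _ _) _.
  have t1' : 0 <= 1 - t by rewrite subr_ge0 ltW.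
  rewrite !normrM (ger0_norm (ltW t0)) (ger0_norm t1').
  have : t * `|x| <= t * a by apply: ler_wpM2l; rewrite // ltW.
  have : (1 - t) * `|y| <= (1 - t) * a by apply: ler_wpM2l.
  lra.
rewrite az; split; first by rewrite divr_gt0.
rewrite !lnM ?posrE ?invr_gt0 // !lnV ?posrE //.
lra.
Qed.

End log_concavity.

Lemma ge0_integral_splitC d (T : measurableType d) (R : realType)
    (mu : {measure set T -> \bar R}) (A : set T) (g : T -> \bar R) :
  measurable A -> measurable_fun setT g -> (forall x, 0 <= g x)%E ->
  (\int[mu]_(x in setT) g x
   = \int[mu]_(x in A) g x + \int[mu]_(x in ~` A) g x)%E.
Proof.
move=> mA mg g0; rewrite -ge0_integral_setU ?setUv //.
- exact: measurableC.
- by rewrite disj_set2E setICr.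
Qed.

(* Make the a.e. filter of Lebesgue measure available to filterS/filterS2. *)
#[local] Instance lebesgue_ae_filter (R : realType) :
  Filter (almost_everywhere (@lebesgue_measure R)) :=
  ae_filter_ringOfSetsType _.

Section lc_value_properties.
Variable R : realType.
Local Notation leb := (@lebesgue_measure R).
Implicit Types (u v h : R -> R) (a c : R).

Definition window a : set R := `[- a, a]%classic.

Lemma measurable_window a : measurable (window a).
Proof. exact: measurable_itv. Qed.

Lemma windowE a x : window a x <-> `|x| <= a.
Proof. by rewrite /window /= in_itv /= ler_norml. Qed.

(* The zero function is a log-concave competitor, so the value is >= 0. *)
Lemma lc_value_ge0 u : (forall x, 0 <= u x) -> (0 <= lc_value u)%E.
Proof.
move=> u0; apply: le_ereal_sup_tmp.
exists (\int[leb]_(x in setT) ((fun _ : R => 0) x)%:E)%E.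
  exists (fun _ => 0) => //; split; [exact: log_concave0 | exact: aeW].
by apply: integral_ge0 => x _; rewrite lee_fin.
Qed.

(* Every competitor is a.e. below the density, hence has mass <= 1. *)
Lemma lc_value_le1 u : prob_density u -> (lc_value u <= 1)%E.
Proof.
move=> [mu [u0 iu]]; apply/ereal_supP => _ [h [hl hae] <-].
rewrite -iu; apply: ae_ge0_le_integral => //.
- by move=> x _; rewrite lee_fin hl.1.
- by apply/measurable_EFinP; exact: log_concave_measurable.
- by move=> x _; rewrite lee_fin.
- by apply/measurable_EFinP.
- by apply: filterS hae => x hx _; rewrite lee_fin.
Qed.

Lemma lc_value_fin u : prob_density u ->
  exists p : R, lc_value u = p%:E /\ 0 <= p <= 1.
Proof.
move=> pu; move: (lc_value_ge0 pu.2.1) (lc_value_le1 pu).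
case: (lc_value u) => [p| |] //=; rewrite !lee_fin => p0 p1.
by exists p; rewrite p0 p1.
Qed.

Lemma density_window_mass u a : prob_density u -> exists k : R,
  [/\ (\int[leb]_(x in window a) (u x)%:E = k%:E)%E,
      (\int[leb]_(x in ~` window a) (u x)%:E = (1 - k)%:E)%E & 0 <= k <= 1].
Proof.
move=> [mu [u0 iu]].
have EFin_u0 : forall x, (0 <= (u x)%:E)%E by move=> x; rewrite lee_fin.
have mEu : measurable_fun setT (EFin \o u) by apply/measurable_EFinP.
have split1 : (\int[leb]_(x in window a) (u x)%:E
                + \int[leb]_(x in ~` window a) (u x)%:E = 1)%E.
  by rewrite -iu (ge0_integral_splitC leb (measurable_window a) mEu EFin_u0).
have : (0 <= \int[leb]_(x in window a) (u x)%:E)%E by exact: integral_ge0.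
have : (0 <= \int[leb]_(x in ~` window a) (u x)%:E)%E by exact: integral_ge0.
move: split1; case: (\int[leb]_(x in window a) _)%E => [k| |];
case: (\int[leb]_(x in ~` window a) _)%E => [l| |] //.
rewrite !lee_fin -EFinD => /eqP; rewrite eqe => /eqP kl l0 k0.
exists k; split => //; first by rewrite -kl addrC addKr.
by rewrite k0 -kl lerDl.
Qed.

Lemma window_mass_le u v a c : measurable_fun setT u -> measurable_fun setT v ->
  (forall x, 0 <= u x) -> (forall x, 0 <= v x) -> 0 <= c ->
  {ae leb, forall x, `|x| <= a -> u x <= c * v x} ->
  (\int[leb]_(x in window a) (u x)%:E
   <= c%:E * \int[leb]_(x in window a) (v x)%:E)%E.
Proof.
move=> mu mv u0 v0 c0 huv; have mK := measurable_window a.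
rewrite -ge0_integralZl_EFin //; last 2 first.
- by move=> x _; rewrite lee_fin.
- by apply/measurable_EFinP; exact: measurable_funS mv.
apply: ae_ge0_le_integral => //.
- by move=> x _; rewrite lee_fin.
- by apply/measurable_EFinP; exact: measurable_funS mu.
- by move=> x _; rewrite -EFinM lee_fin mulr_ge0.
- apply/measurable_EFinP; apply: measurable_funM => //.
  exact: measurable_funS mv.
- by apply: filterS huv => x H /windowE ax; rewrite -EFinM lee_fin H.
Qed.

(* Comparison principle: a log-concave h <= u gives the log-concave
   candidate h 1_[-a,a] / c <= v, and h loses at most the tail mass of u. *)
Lemma lc_value_compare u v a c : prob_density u -> (forall x, 0 <= v x) ->
  0 < c -> {ae leb, forall x, `|x| <= a -> u x <= c * v x} ->
  (lc_value u
   <= c%:E * lc_value v + \int[leb]_(x in ~` window a) (u x)%:E)%E.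
Proof.
move=> [mu [u0 iu]] v0 c0 huv; apply/ereal_supP => _ [h [hl hae] <-].
have h0 := hl.1; have mh := log_concave_measurable hl.
pose h' := fun x => if `|x| <= a then h x / c else 0.
have hl' : log_concave h' := log_concave_trunc_scale a hl c0.
have mh' := log_concave_measurable hl'.
have h'v : (\int[leb]_(x in setT) (h' x)%:E <= lc_value v)%E.
  apply: ereal_sup_ubound; exists h' => //; split => //.
  apply: filterS2 hae huv => x hu huv'; rewrite /h'; case: ifPn => ax //.
  by rewrite ler_pdivrMr // mulrC (le_trans hu (huv' ax)).
have mK := measurable_window a.
rewrite (ge0_integral_splitC leb (g := fun x => (h x)%:E) mK); last 2 first.
- by apply/measurable_EFinP.
- by move=> x; rewrite lee_fin.
apply: leeD.
  have -> : (\int[leb]_(x in window a) (h x)%:E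
             = \int[leb]_(x in window a) (c%:E * (h' x)%:E))%E.
    apply: eq_integral => x; rewrite inE => /windowE ax.
    by rewrite /h' ax -EFinM mulrC divfK ?gt_eqF.
  rewrite ge0_integralZl_EFin //; last 3 first.
  - by move=> x _; rewrite lee_fin hl'.1.
  - by apply/measurable_EFinP; exact: measurable_funS mh'.
  - exact: ltW.
  apply: lee_wpmul2l; first by rewrite lee_fin ltW.
  apply: le_trans h'v; apply: ge0_subset_integral => //.
  - by apply/measurable_EFinP.
  - by move=> x _; rewrite lee_fin hl'.1.
apply: ae_ge0_le_integral => //.
- exact: measurableC.
- by move=> x _; rewrite lee_fin.
- by apply/measurable_EFinP; exact: measurable_funS mh.
- by move=> x _; rewrite lee_fin.
- by apply/measurable_EFinP; exact: measurable_funS mu.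
- by apply: filterS hae => x hx _; rewrite lee_fin.
Qed.

Lemma lc_value_stable (f g : R -> R) a c (eta : R) :
  prob_density f -> prob_density g ->
  1 <= c -> {ae leb, forall x, `|x| <= a -> g x <= c * f x /\ f x <= c * g x} ->
  (\int[leb]_(x in ~` window a) (f x)%:E <= eta%:E)%E ->
  (`|lc_value g - lc_value f| <= (2 * (c - 1) + eta)%:E)%E.
Proof.
move=> pf pg c1 hae tail_f; have c0 : 0 < c by apply: lt_le_trans c1.
have hgf : {ae leb, forall x, `|x| <= a -> g x <= c * f x}.
  by apply: filterS hae => x H /H[].
have hfg : {ae leb, forall x, `|x| <= a -> f x <= c * g x}.
  by apply: filterS hae => x H /H[].
have Vg_le := lc_value_compare pg pf.2.1 c0 hgf.
have Vf_le := lc_value_compare pf pg.2.1 c0 hfg.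
have [kf [kfK kfC kf01]] := density_window_mass a pf.
have [kg [kgK kgC kg01]] := density_window_mass a pg.
have kfg : kf <= c * kg.
  have := window_mass_le pf.1 pg.1 pf.2.1 pg.2.1 (ltW c0) hfg.
  by rewrite kfK kgK -EFinM lee_fin.
have [p [pE p01]] := lc_value_fin pf; have [q [qE q01]] := lc_value_fin pg.
rewrite pE qE kgC -EFinM -EFinD lee_fin in Vg_le.
rewrite pE qE kfC -EFinM -EFinD lee_fin in Vf_le.
rewrite kfC lee_fin in tail_f.
rewrite pE qE -EFinB abse_EFin lee_fin ler_norml.
have c1' : 0 <= c - 1 by rewrite subr_ge0.
have hp : (c - 1) * p <= c - 1 by rewrite ler_piMr //; case/andP: p01.
have hq : (c - 1) * q <= c - 1 by rewrite ler_piMr //; case/andP: q01.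
have hk : (c - 1) * kg <= c - 1 by rewrite ler_piMr //; case/andP: kg01.
case/andP: p01 => ? ?; case/andP: q01 => ? ?.
apply/andP; split; lra.
Qed.

End lc_value_properties.

Section density_tails.
Variable R : realType.
Local Notation leb := (@lebesgue_measure R).

(* Monotone convergence: the mass of the window [-(n+1), n+1] tends to 1. *)
Lemma density_window_mass_cvg (f : R -> R) : prob_density f ->
  (fun n : nat => \int[leb]_(x in window n.+1%:R) (f x)%:E)%E @ \oo --> 1%E.
Proof.
move=> [mf [f0 fi]].
pose g := fun n : nat => (EFin \o f) \_ (window n.+1%:R).
have mg n : measurable_fun setT (g n).
  apply/measurable_restrict => //; first exact: measurable_window.
  by rewrite setTI; apply/measurable_EFinP; exact: measurable_funS mf.
have g0 n x : setT x -> (0 <= g n x)%E.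
  by move=> _; rewrite /g /patch; case: ifP => // _; rewrite lee_fin.
have g_nd x : setT x -> {homo g^~ x : n m / (n <= m)%N >-> (n <= m)%E}.
  move=> _ n m nm; rewrite /g /patch; case: ifPn => xn; last first.
    by case: ifP => // _; rewrite lee_fin.
  rewrite ifT //; move: xn; rewrite !inE => /windowE xn; apply/windowE.
  by apply: le_trans xn _; rewrite ler_nat.
have g_lim : (fun x => limn (g^~ x)) = EFin \o f.
  apply/funext => x; apply: lim_near_cst => //.
  exists (Num.truncn `|x|) => // n /= xn; rewrite /g /patch ifT // inE.
  apply/windowE/ltW; apply: lt_le_trans (real_truncnS_gt (normr_real x)) _.
  by rewrite ler_nat ltnS.
have := cvg_monotone_convergence (mu := leb) measurableT mg g0 g_nd.
rewrite g_lim /= fi; apply: cvg_trans; apply: near_eq_cvg; apply: nearW => n.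
by rewrite [RHS]integral_mkcond.
Qed.

Lemma density_tail_small (f : R -> R) (eta : R) : prob_density f -> 0 < eta ->
  exists a : R, 0 < a /\ (\int[leb]_(x in ~` window a) (f x)%:E <= eta%:E)%E.
Proof.
move=> pf eta0; apply: contrapT => no_a.
have small_mass n :
    (\int[leb]_(x in window n.+1%:R) (f x)%:E <= (1 - eta)%:E)%E.
  have [k [kK kC k01]] := density_window_mass n.+1%:R pf.
  rewrite kK lee_fin; apply: contrapT => /negP; rewrite -ltNge => hk.
  apply: no_a; exists n.+1%:R; split; first by rewrite ltr0Sn.
  by rewrite kC lee_fin; apply: ltW; rewrite ltrBlDl -ltrBlDr.
have cv := density_window_mass_cvg pf.
have : (1 <= (1 - eta)%:E)%E.
  rewrite -(cvg_lim _ cv) //; apply: lime_le; last exact: nearW.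
  by apply/cvg_ex; exists 1%E.
by rewrite lee_fin; lra.
Qed.

End density_tails.

Section ratio_bounds.
Variable R : realType.
Local Notation leb := (@lebesgue_measure R).

Lemma maxmin_ratio_ge1 (u v : R) :
  0 <= u -> 0 <= v -> (1 <= maxmin_ratio u v)%E.
Proof.
move=> u0 v0; rewrite /maxmin_ratio; case: ifPn => m0.
  by rewrite lee_fin ler_pdivlMr // mul1r ge_min le_max lexx.
by case: ifP => _; rewrite ?lexx ?leey.
Qed.

Lemma maxmin_ratio_le (u v c : R) : 0 <= u -> 0 <= v ->
  (maxmin_ratio u v <= c%:E)%E -> u <= c * v /\ v <= c * u.
Proof.
move=> u0 v0; rewrite /maxmin_ratio; case: ifPn => [m0|_]; last first.
  case: ifPn => [/eqP M0 _|_]; last by rewrite leye_eq.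
  have /eqP -> : u == 0 by rewrite eq_le u0 andbT -M0 le_max lexx.
  have /eqP -> : v == 0 by rewrite eq_le v0 andbT -M0 le_max lexx orbT.
  by rewrite mulr0.
rewrite lee_fin => h.
have c0 : 0 <= c.
  by apply: le_trans h; rewrite divr_ge0 ?(ltW m0) // le_max u0.
move: h; rewrite ler_pdivrMr // mulrC => h.
have Mu : u <= Num.max u v by rewrite le_max lexx.
have Mv : v <= Num.max u v by rewrite le_max lexx orbT.
have mu : Num.min u v <= u by rewrite ge_min lexx.
have mv : Num.min u v <= v by rewrite ge_min lexx orbT.
have := ler_wpM2l c0 mu; have := ler_wpM2l c0 mv.
lra.
Qed.

Lemma leb_window (a : R) : 0 < a -> leb (window a) = (a + a)%:E.
Proof.
move=> a0; rewrite lebesgue_measure_itv /= ifT ?lte_fin ?gtrN //.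
by rewrite -EFinD opprK.
Qed.

(* The window has positive measure, so the essential sup over it of a
   function that is everywhere >= 1 is still >= 1. *)
Lemma esssup_on_ge1 (a : R) (g : R -> \bar R) : 0 < a ->
  (forall x, (1 <= g x)%E) -> (1 <= esssup_on a g)%E.
Proof.
move=> a0 g1; apply/ereal_infP => y [N [mN N0 sub]].
rewrite leNgt; apply/negP => y1.
have KN : window a `<=` N.
  move=> x /windowE ax; apply: sub => /= H.
  by have := lt_le_trans y1 (g1 x); rewrite ltNge (H ax).
have KN0 : (leb (window a) <= 0)%E.
  have := le_measure leb (mem_set (measurable_window a)) (mem_set mN) KN.
  move/le_trans; apply.
  by rewrite -[X in (_ <= X)%E]N0.
have : ((a + a)%:E <= 0)%E by rewrite -(leb_window a0); exact: KN0.
by rewrite lee_fin; lra.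
Qed.

Lemma esssup_ratio_lt (f g : R -> R) (a c : R) :
  (forall x, 0 <= f x) -> (forall x, 0 <= g x) ->
  (esssup_on a (fun x => maxmin_ratio (g x) (f x)) < c%:E)%E ->
  {ae leb, forall x, `|x| <= a -> g x <= c * f x /\ f x <= c * g x}.
Proof.
move=> f0 g0 /ereal_inf_lt [y /= Hy yc].
apply: filterS Hy => x Hx ax; apply: maxmin_ratio_le => //.
exact: le_trans (Hx ax) (ltW yc).
Qed.

Lemma lc_value_close (f g : R -> R) (a eps : R) :
  prob_density f -> prob_density g -> 0 < eps ->
  (\int[leb]_(x in ~` window a) (f x)%:E <= (eps / 4)%:E)%E ->
  (esssup_on a (fun x => maxmin_ratio (g x) (f x)) <= (1 + eps / 8)%:E)%E ->
  (`|lc_value g - lc_value f| <= eps%:E)%E.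
Proof.
move=> pf pg eps0 tail_f ratio_g; set c := 1 + eps / 4.
have c1 : 1 <= c by rewrite /c lerDl divr_ge0 // ltW.
have ratio_lt_c : (esssup_on a (fun x => maxmin_ratio (g x) (f x)) < c%:E)%E.
  by apply: le_lt_trans ratio_g _; rewrite lte_fin /c; lra.
have hae := esssup_ratio_lt pf.2.1 pg.2.1 ratio_lt_c.
apply: le_trans (lc_value_stable pf pg c1 hae tail_f) _.
by rewrite lee_fin /c; lra.
Qed.

End ratio_bounds.

Section convergence_in_probability.
Context d (T : measurableType d) (R : realType) (P : probability T R).
Implicit Types r : T -> \bar R.

Lemma measurable_exceed r (y : \bar R) : measurable_fun setT r ->
  measurable [set w | (y < r w)%E].
Proof.
by move=> mr; rewrite -[X in measurable X]setTI; exact: emeasurable_fun_o_infty.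
Qed.

(* Markov's inequality for r - 1 when r >= 1:
   1 + dl P(r > 1 + dl) <= E r. *)
Lemma markov_above1 r (dl : R) : 0 < dl -> measurable_fun setT r ->
  (forall w, (1 <= r w)%E) ->
  (1 + dl%:E * P [set w | ((1 + dl)%:E < r w)%E] <= \int[P]_(w in setT) r w)%E.
Proof.
move=> dl0 mr r1; set A := [set w | _].
have mA : measurable A := measurable_exceed _ mr.
have r0 w : (0 <= r w)%E by apply: le_trans (r1 w).
rewrite (ge0_integral_splitC P mA mr r0).
have on_A : ((1 + dl)%:E * P A <= \int[P]_(w in A) r w)%E.
  rewrite -(integral_cst P mA); apply: ge0_le_integral => //.
  - by move=> x _; rewrite lee_fin; lra.
  - exact: measurable_funS mr.
  - by move=> x /ltW.
have off_A : (1 * P (~` A) <= \int[P]_(w in ~` A) r w)%E.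
  rewrite -(integral_cst P (measurableC mA)); apply: ge0_le_integral => //.
  - exact: measurableC.
  - exact: measurable_funS mr.
rewrite probability_setC // mul1e in off_A.
have : (P A <= 1)%E by exact: probability_le1.
have : (0 <= P A)%E by exact: measure_ge0.
move: on_A off_A; case: (P A) => [p| |] //= on_A off_A p0 p1.
apply: le_trans (leeD on_A off_A); rewrite -!EFinM -EFinB -!EFinD lee_fin; lra.
Qed.

Lemma cvg_prob_exceed (r : nat -> T -> \bar R) (dl : R) : 0 < dl ->
  (forall n, measurable_fun setT (r n)) -> (forall n w, (1 <= r n w)%E) ->
  (fun n => \int[P]_(w in setT) r n w)%E @ \oo --> 1%E ->
  (fun n => P [set w | ((1 + dl)%:E < r n w)%E]) @ \oo --> 0%E.
Proof.
move=> dl0 mr r1 Er1; set I := fun n => (\int[P]_(w in setT) r n w)%E.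
apply: (@squeeze_cvge _ _ _ _ (fun _ => 0%E) _
  (fun n => (I n - 1) * (dl^-1)%:E)%E).
- apply: nearW => n; have := markov_above1 dl0 (mr n) (r1 n).
  have : (P [set w | ((1 + dl)%:E < r n w)%E] <= 1)%E.
    exact/probability_le1/measurable_exceed.
  have : (0 <= P [set w | ((1 + dl)%:E < r n w)%E])%E by exact: measure_ge0.
  rewrite /I; case: (P _) => [p| |] //.
  case: (\int[P]_(w in _) _)%E => [q| |] //.
  + rewrite -EFinM -EFinD !lee_fin => p0 p1 M; apply/andP; split => //.
    by rewrite ler_pdivlMr //; lra.
  + move=> p0 p1 _; apply/andP; split => //.
    by rewrite gt0_mulye ?leey // lte_fin invr_gt0.
- exact: cvg_cst.
- have := cvgeZr (y := (dl^-1)%:E) isT (cvgeB _ Er1 (cvg_cst 1%E)).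
  by rewrite subee // mul0e; apply.
Qed.

End convergence_in_probability.

Theorem mainTheorem8 (R : realType) (d : measure_display) (Omega : measurableType d)
  (P : probability Omega R) (f : R -> R) (fhat : nat -> Omega -> R -> R) :
  prob_density f ->
  (forall n w, prob_density (fhat n w)) ->
  (forall (a : R), 0 < a ->
     (forall n, measurable_fun [set: Omega]
        (fun w => esssup_on a (fun x => maxmin_ratio (fhat n w x) (f x)))) /\
     ((fun n => (\int[P]_(w in setT) esssup_on a (fun x => maxmin_ratio (fhat n w x) (f x)))%E)
        @ \oo --> 1%E)) ->
  forall eps : R, 0 < eps ->
    exists A : nat -> set Omega,
      (forall n, measurable (A n)) /\
      (forall n, [set w | (eps%:E < `|lc_value (fhat n w) - lc_value f|)%E] `<=` A n) /\
      ((fun n => P (A n)) @ \oo --> 0%E).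
Proof.
move=> pf pfhat ratio_cvg eps eps0.
have [a [a0 tail_f]] : exists a, 0 < a /\
    (\int[lebesgue_measure]_(x in ~` window a) (f x)%:E <= (eps / 4)%:E)%E.
  by apply: density_tail_small; rewrite ?divr_gt0.
have [mr Er1] := ratio_cvg a a0.
set r := fun n w => esssup_on a (fun x => maxmin_ratio (fhat n w x) (f x)).
have r1 n w : (1 <= r n w)%E.
  apply: esssup_on_ge1 => // x.
  by apply: maxmin_ratio_ge1; [exact: (pfhat n w).2.1 | exact: pf.2.1].
exists (fun n => [set w | ((1 + eps / 8)%:E < r n w)%E]); split; [|split].
- by move=> n; apply: measurable_exceed; exact: mr.
- move=> n w /= far; rewrite ltNge; apply/negP => r_small; move: far.
  by rewrite ltNge (lc_value_close pf (pfhat n w) eps0 tail_f r_small).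
- by apply: cvg_prob_exceed => //; rewrite divr_gt0.
Qed.
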